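(* For $M\in\Lambda$, the following are equivalent: (1) $M$ is in $\mathsf v$-normal form; (2) every $t\in\mathcal T(M)$ is in $\beta_r\sigma$-normal form, i.e. contains no subterm that is a $\beta_r$-, $\sigma_1$- or $\sigma_3$-redex.
   Context: $\lambda$-terms and values are $M,N::=V\mid MN$, $V::=x\mid\lambda x.M$, up to $\alpha$-conversion. Rules: $(\beta_v)$ $(\lambda x.M)V\to M\{x:=V\}$ if $V$ is a value; $(\sigma_1)$ $(\lambda x.M)NP\to(\lambda x.MP)N$ if $x\notin\mathrm{FV}(P)$; $(\sigma_3)$ $V((\lambda x.M)N)\to(\lambda x.VM)N$ if $V$ is a value and $x\notin\mathrm{FV}(V)$. $M$ is in $\mathsf v$-normal form if it contains no redex of these three kinds. Resource calculus: resource values $v::=x\mid\lambda x.t$; simple terms $s,t::=st\mid[v_1,\dots,v_k]$ ($k\ge0$, bags are finite multisets); $[x^n]$ is the bag of $n$ copies of $x$. Redexes: a $\beta_r$-redex is $[\lambda x.t][v_1,\dots,v_n]$; a $\sigma_1$-redex is $[\lambda x.t]s_1s_2$ (with $x\notin\mathrm{FV}(s_1)$ after renaming); a $\sigma_3$-redex is $[v]([\lambda x.t]s)$ with $v$ a resource value (with $x\notin\mathrm{FV}(v)$ after renaming). Taylor expansion: $\mathcal T(x)=\{[x^n]\mid n\ge0\}$, $\mathcal T(\lambda x.N)=\{[\lambda x.t_1,\dots,\lambda x.t_n]\mid n\ge0,\ t_i\in\mathcal T(N)\}$, $\mathcal T(PQ)=\{st\mid s\in\mathcal T(P),t\in\mathcal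 T(Q)\}$. *)

(* Terms are represented with de Bruijn indices (i.e. up to
   alpha-conversion). *)
From Stdlib Require Import List.
Import ListNotations.

Inductive term : Type :=
| Var : nat -> term
| Lam : term -> term
| App : term -> term -> term.

Definition is_value (M : term) : Prop :=
  match M with Var _ | Lam _ => True | App _ _ => False end.

Inductive subterm : term -> term -> Prop :=
| sub_refl M : subterm M M
| sub_lam N M : subterm N M -> subterm N (Lam M)
| sub_appl N M P : subterm N M -> subterm N (App M P)
| sub_appr N M P : subterm N P -> subterm N (App M P).

Definition beta_v_redex (R : term) : Prop :=
  exists M V, R = App (Lam M) V /\ is_value V.

(** sigma_1-redex: (\x.M) N P  (the side condition x notin FV(P) is always
    achievable up to alpha-renaming; with de Bruijn indices the reduct
    simply shifts P). *)
Definition sigma1_redex (R : term) : Prop :=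
  exists M N P, R = App (App (Lam M) N) P.

(** sigma_3-redex: V ((\x.M) N) with V a value (side condition as above). *)
Definition sigma3_redex (R : term) : Prop :=
  exists V M N, R = App V (App (Lam M) N) /\ is_value V.

Definition v_redex (R : term) : Prop :=
  beta_v_redex R \/ sigma1_redex R \/ sigma3_redex R.

Definition v_normal (M : term) : Prop :=
  forall N, subterm N M -> ~ v_redex N.

(** Simple terms s,t ::= s t | [v1,...,vk]; resource values v ::= x | \x.t.
    Bags (finite multisets) are represented by lists; all notions below are
    invariant under permutation of bags. *)
Inductive rterm : Type :=
| rapp : rterm -> rterm -> rterm
| rbag : list rval -> rterm
with rval : Type :=
| rvar : nat -> rval
| rlam : rterm -> rval.

Inductive rsubterm : rterm -> rterm -> Prop :=
| rsub_refl t : rsubterm t t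
| rsub_appl u s t : rsubterm u s -> rsubterm u (rapp s t)
| rsub_appr u s t : rsubterm u t -> rsubterm u (rapp s t)
| rsub_bag u t l : In (rlam t) l -> rsubterm u t -> rsubterm u (rbag l).

Definition beta_r_redex (r : rterm) : Prop :=
  exists t vs, r = rapp (rbag [rlam t]) (rbag vs).

Definition rsigma1_redex (r : rterm) : Prop :=
  exists t s1 s2, r = rapp (rapp (rbag [rlam t]) s1) s2.

Definition rsigma3_redex (r : rterm) : Prop :=
  exists v t s, r = rapp (rbag [v]) (rapp (rbag [rlam t]) s).

Definition r_redex (r : rterm) : Prop :=
  beta_r_redex r \/ rsigma1_redex r \/ rsigma3_redex r.

Definition r_normal (t : rterm) : Prop :=
  forall u, rsubterm u t -> ~ r_redex u.

(** * Taylor expansion: taylor M t  means  t \in T(M). *)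
Inductive taylor : term -> rterm -> Prop :=
| taylor_var x n : taylor (Var x) (rbag (repeat (rvar x) n))
| taylor_lam N ts : Forall (taylor N) ts -> taylor (Lam N) (rbag (map rlam ts))
| taylor_app P Q s t : taylor P s -> taylor Q t -> taylor (App P Q) (rapp s t).

(* A Taylor element [t] of [M] has the same applicative skeleton as [M]:
   application nodes correspond, a variable or an abstraction becomes a bag,
   and the subterms of [t] are Taylor elements of subterms of [M].  A singleton
   bag [[\x.t]] can only come from an abstraction and any bag from a value, so
   a resource redex in some [t] projects to a v-redex of [M].  Conversely every
   term has a Taylor element and every value one that is a singleton bag, so
   each v-redex of [M] lifts to a resource redex inside some [t]. *)
From Stdlib Require Import List.
Import ListNotations.

Lemma taylor_inhabited (M : term) : exists t, taylor M t.
Proof.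
  induction M as [x | N _ | P [s Hs] Q [t Ht]].
  - exists (rbag (repeat (rvar x) 0)); constructor.
  - exists (rbag (map rlam [])); constructor; constructor.
  - exists (rapp s t); constructor; assumption.
Qed.

Lemma taylor_lam_singleton (N : term) (t : rterm) :
  taylor N t -> taylor (Lam N) (rbag [rlam t]).
Proof.
  intros Ht; apply (taylor_lam N [t]); constructor; [assumption | constructor].
Qed.

Lemma taylor_value_singleton (V : term) :
  is_value V -> exists v, taylor V (rbag [v]).
Proof.
  destruct V as [x | N | P Q]; simpl; intros HV.
  - exists (rvar x); apply (taylor_var x 1).
  - destruct (taylor_inhabited N) as [t Ht].
    exists (rlam t); apply taylor_lam_singleton; assumption.
  - contradiction.
Qed.

Lemma taylor_app_inv (M : term) (s t : rterm) :
  taylor M (rapp s t) -> exists P Q, M = App P Q /\ taylor P s /\ taylor Q t.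
Proof. intros H; inversion H; subst; eauto. Qed.

Lemma taylor_bag_is_value (V : term) (l : list rval) :
  taylor V (rbag l) -> is_value V.
Proof. intros H; inversion H; simpl; trivial. Qed.

Lemma taylor_singleton_lam_inv (P : term) (t : rterm) :
  taylor P (rbag [rlam t]) -> exists N, P = Lam N.
Proof.
  intros H; inversion H as [x n E | N ts _ E |]; subst; eauto.
  destruct n; discriminate.
Qed.

Lemma taylor_lift_subterm (N M : term) (u : rterm) :
  subterm N M -> taylor N u -> exists t, taylor M t /\ rsubterm u t.
Proof.
  intros HNM Hu; induction HNM as [M | N M _ IH | N M P _ IH | N M P _ IH].
  - exists u; split; [assumption | constructor].
  - destruct (IH Hu) as [t [Ht Hut]].
    exists (rbag [rlam t]); split; [apply taylor_lam_singleton; assumption |].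
    apply (rsub_bag u t); [left |]; trivial.
  - destruct (IH Hu) as [t [Ht Hut]]; destruct (taylor_inhabited P) as [s Hs].
    exists (rapp t s); split; [constructor | apply rsub_appl]; assumption.
  - destruct (IH Hu) as [t [Ht Hut]]; destruct (taylor_inhabited M) as [s Hs].
    exists (rapp s t); split; [constructor | apply rsub_appr]; assumption.
Qed.

Lemma taylor_project_rsubterm (u t : rterm) (M : term) :
  rsubterm u t -> taylor M t -> exists N, subterm N M /\ taylor N u.
Proof.
  intros Hut; revert M.
  induction Hut as [t | u s t _ IH | u s t _ IH | u t l Hin _ IH]; intros M HM.
  - exists M; split; [constructor | assumption].
  - destruct (taylor_app_inv M s t HM) as [P [Q [-> [Hs _]]]].
    destruct (IH P Hs) as [N [HN Hu]].
    exists N; split; [apply sub_appl |]; assumption.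
  - destruct (taylor_app_inv M s t HM) as [P [Q [-> [_ Ht]]]].
    destruct (IH Q Ht) as [N [HN Hu]].
    exists N; split; [apply sub_appr |]; assumption.
  - inversion HM as [x n E | M' ts Hts E |]; subst.
    + apply repeat_spec in Hin; discriminate.
    + apply in_map_iff in Hin as [t' [Et Hin]]; injection Et as ->.
      destruct (IH M' (proj1 (Forall_forall _ ts) Hts t Hin)) as [N [HN Hu]].
      exists N; split; [apply sub_lam |]; assumption.
Qed.

Lemma taylor_r_redex_v_redex (N : term) (u : rterm) :
  taylor N u -> r_redex u -> v_redex N.
Proof.
  intros Hu [[t [vs ->]] | [[t [s1 [s2 ->]]] | [v [t [s ->]]]]].
  - destruct (taylor_app_inv _ _ _ Hu) as [P [Q [-> [HP HQ]]]].
    destruct (taylor_singleton_lam_inv P t HP) as [M ->].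
    left; exists M, Q; split; [reflexivity | exact (taylor_bag_is_value Q vs HQ)].
  - destruct (taylor_app_inv _ _ _ Hu) as [P1 [Q [-> [HP1 _]]]].
    destruct (taylor_app_inv _ _ _ HP1) as [P [R [-> [HP _]]]].
    destruct (taylor_singleton_lam_inv P t HP) as [M ->].
    right; left; exists M, R, Q; reflexivity.
  - destruct (taylor_app_inv _ _ _ Hu) as [V [Q1 [-> [HV HQ1]]]].
    destruct (taylor_app_inv _ _ _ HQ1) as [P [Q [-> [HP _]]]].
    destruct (taylor_singleton_lam_inv P t HP) as [M ->].
    right; right; exists V, M, Q; split; [reflexivity |].
    exact (taylor_bag_is_value V [v] HV).
Qed.

Lemma v_redex_taylor_r_redex (N : term) :
  v_redex N -> exists u, taylor N u /\ r_redex u.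
Proof.
  intros [[M [V [-> HV]]] | [[M [P [Q ->]]] | [V [M [P [-> HV]]]]]];
    destruct (taylor_inhabited M) as [t Ht].
  - destruct (taylor_value_singleton V HV) as [v Hv].
    exists (rapp (rbag [rlam t]) (rbag [v])); split.
    + constructor; [apply taylor_lam_singleton |]; assumption.
    + left; exists t, [v]; reflexivity.
  - destruct (taylor_inhabited P) as [s1 Hs1]; destruct (taylor_inhabited Q) as [s2 Hs2].
    exists (rapp (rapp (rbag [rlam t]) s1) s2); split.
    + repeat constructor; try apply taylor_lam_singleton; assumption.
    + right; left; exists t, s1, s2; reflexivity.
  - destruct (taylor_value_singleton V HV) as [v Hv].
    destruct (taylor_inhabited P) as [s Hs].
    exists (rapp (rbag [v]) (rapp (rbag [rlam t]) s)); split.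
    + repeat constructor; try apply taylor_lam_singleton; assumption.
    + right; right; exists v, t, s; reflexivity.
Qed.

Theorem lemma3p13 (M : term) :
  v_normal M <-> (forall t : rterm, taylor M t -> r_normal t).
Proof.
  split.
  - intros HM t Ht u Hut Hu.
    destruct (taylor_project_rsubterm u t M Hut Ht) as [N [HN HNu]].
    exact (HM N HN (taylor_r_redex_v_redex N u HNu Hu)).
  - intros Hnormal N HN HNredex.
    destruct (v_redex_taylor_r_redex N HNredex) as [u [Hu Hredex]].
    destruct (taylor_lift_subterm N M u HN Hu) as [t [Ht Hut]].
    exact (Hnormal t Ht u Hut Hredex).
Qed.
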